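(* Let $f:\mathbb{R}^N\times(0,T]\to\mathbb{R}^N$ be monotone in the sense that $(f(u,t)-f(v,t),u-v)\le 0$ for all $u,v\in\mathbb{R}^N$ and all $t$. Let $U$ and $V$ be the $\mathrm{mdG}(q)$ solutions of $\dot w=f(w,t)$ on $(0,T]$ with initial data $U(0^-)$ and $V(0^-)$ respectively, computed on the same partitions and with the same local degrees. Then at every synchronized time-level $\bar t$ (for instance $\bar t=T$), $$\|U(\bar t^-)-V(\bar t^-)\|\le \|U(0^-)-V(0^-)\|,$$ where $\|\cdot\|$ is the Euclidean norm and $(\cdot,\cdot)$ the Euclidean inner product.
   Context: Multi-adaptive discontinuous Galerkin method $\mathrm{mdG}(q)$ for $\dot w=f(w,t)$ on $(0,T]$ with $w(0^-)$ given: for each component $i=1,\dots,N$ one chooses a partition $0=t_{i0}<\dots<t_{iM_i}=T$, intervals $I_{ij}=(t_{i,j-1},t_{ij}]$ and degrees $q_{ij}\ge0$. The solution $W$ has $W_i|_{I_{ij}}\in\mathcal{P}^{q_{ij}}(I_{ij})$ (polynomials of degree $\le q_{ij}$; no continuity required across nodes), $W_i(0^-)$ given, and for all $i,j$ $$[W_i]_{i,j-1}\,v(t_{i,j-1}^+)+\int_{I_{ij}}\dot W_i\,v\,dt=\int_{I_{ij}}f_i(W(t),t)\,v\,dt\qquad\forall v\in\mathcal{P}^{q_{ij}}(I_{ij}),$$ where $[W_i]_{ij}=W_i(t_{ij}^+)-W_i(t_{ij}^-)$ and integrals are exact. A synchronized time-level is a time $\bar t\in(0,T]$ that is a partition node $t_{ij}$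 for every component $i$. *)

From HB Require Import structures.
From mathcomp Require Import all_boot all_order all_algebra.
From mathcomp Require Import all_classical all_reals all_analysis.
Set Implicit Arguments. Unset Strict Implicit. Unset Printing Implicit Defensive.
Import Order.TTheory GRing.Theory Num.Theory.
Local Open Scope classical_set_scope.
Local Open Scope ring_scope.

Definition vdot {R : realType} {N : nat} (x y : 'I_N -> R) : R :=
  \sum_(i < N) x i * y i.
Definition vnorm {R : realType} {N : nat} (x : 'I_N -> R) : R :=
  Num.sqrt (vdot x x).
Definition vsub {R : realType} {N : nat} (x y : 'I_N -> R) : 'I_N -> R :=
  fun i => x i - y i.

Definition monotone_rhs {R : realType} {N : nat} (T : R)
  (f : ('I_N -> R) -> R -> ('I_N -> R)) : Prop :=
  forall (u v : 'I_N -> R) (t : R), 0 < t <= T ->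
    vdot (vsub (f u t) (f v t)) (vsub u v) <= 0.

Definition valid_partitions {R : realType} {N : nat} (T : R)
  (M : 'I_N -> nat) (tp : 'I_N -> nat -> R) : Prop :=
  forall i : 'I_N, tp i 0%N = 0 /\ tp i (M i) = T /\
    (forall j : nat, (j < M i)%N -> tp i j < tp i j.+1).

Definition intI {R : realType} (a b : R) (g : R -> R) : R :=
  Rintegral (@lebesgue_measure R) `]a, b] g.

(* W : 'I_N -> R -> R gives the values W_i(t) for t in (0,T]; W0 = W(0^-).
   W is an mdG(q) solution: on each I_ij = (t_{i,j-1}, t_ij], W_i coincides with
   a polynomial P of degree <= q_ij, the integrand f_i(W(t),t) is integrable on
   I_ij (the exact integrals exist), and the Galerkin equations hold for all test
   polynomials v of degree <= q_ij.  W_i(t_{i,j-1}^+) = P(t_{i,j-1}) and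
   W_i(t_{i,j-1}^-) = W_i(t_{i,j-1}) (resp. W0 i when j = 1). *)
Definition mdG_solution {R : realType} {N : nat}
  (M : 'I_N -> nat) (tp : 'I_N -> nat -> R) (q : 'I_N -> nat -> nat)
  (f : ('I_N -> R) -> R -> ('I_N -> R))
  (W0 : 'I_N -> R) (W : 'I_N -> R -> R) : Prop :=
  forall (i : 'I_N) (j : nat), (0 < j <= M i)%N ->
    exists P : {poly R},
      (size P <= (q i j).+1)%N /\
      (forall t, tp i j.-1 < t <= tp i j -> W i t = P.[t]) /\
      (@lebesgue_measure R).-integrable `]tp i j.-1, tp i j]
         (EFin \o (fun t => f (fun k => W k t) t i)) /\
      (forall v : {poly R}, (size v <= (q i j).+1)%N ->
         (P.[tp i j.-1] - (if j.-1 == 0%N then W0 i else W i (tp i j.-1)))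
             * v.[tp i j.-1]
         + intI (tp i j.-1) (tp i j) (fun t => (P^`()).[t] * v.[t])
         = intI (tp i j.-1) (tp i j) (fun t => f (fun k => W k t) t i * v.[t])).

Definition synchronized {R : realType} {N : nat} (T : R)
  (M : 'I_N -> nat) (tp : 'I_N -> nat -> R) (tbar : R) : Prop :=
  0 < tbar <= T /\ forall i : 'I_N, exists j : nat, (j <= M i)%N /\ tp i j = tbar.

From HB Require Import structures.
From mathcomp Require Import all_boot all_order all_algebra.
From mathcomp Require Import all_classical all_reals all_analysis.
From mathcomp Require Import ring lra measurable_realfun.
Import Order.TTheory GRing.Theory Num.Theory.
Local Open Scope classical_set_scope.
Local Open Scope ring_scope.

(* On an interval where the i-th components of U and V are polynomials P and
   Q, test both Galerkin equations with v = D := P - Q and subtract.  Writing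
   w for the difference of the left limits, the jump term (D(a) - w) D(a) plus
   the integral of D' D = (D(b)^2 - D(a)^2)/2 equals the integral J of
   (f(U) - f(V))_i (U - V)_i, hence D(b)^2 - w^2 = 2 J - (D(a) - w)^2 <= 2 J.
   Telescoping over the intervals of component i up to the synchronized level
   and summing over i bounds |U - V|^2 - |U0 - V0|^2 by twice the integral of
   (f(U) - f(V), U - V), which is nonpositive by monotonicity. *)

Set Implicit Arguments.
Unset Strict Implicit.

Section PolynomialIntegrals.
Variable R : realType.
Notation mu := (@lebesgue_measure R).

Lemma integrable_horner (p : {poly R}) (a b : R) :
  mu.-integrable `]a, b] (EFin \o horner p).
Proof.
apply: (@integrableS _ _ _ mu `[a, b]) => //; first exact: subset_itv_oc_cc.
apply: continuous_compact_integrable; first exact: segment_compact.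
by apply: continuous_subspaceT => x; exact: continuous_horner.
Qed.

Lemma horner_derivable_oo_LRcontinuous (p : {poly R}) (a b : R) :
  derivable_oo_LRcontinuous (horner p) a b.
Proof.
split.
- by move=> x _; exact: derivable_horner.
- by apply: cvg_at_right_filter; exact: continuous_horner.
- by apply: cvg_at_left_filter; exact: continuous_horner.
Qed.

Lemma intI_deriv_mul_poly (p : {poly R}) (a b : R) : a < b ->
  intI a b (fun t => (p^`()).[t] * p.[t]) = (p.[b] ^+ 2 - p.[a] ^+ 2) / 2.
Proof.
move=> ab.
have dp := horner_derivable_oo_LRcontinuous p a b.
have cp' := derivable_oo_LRcontinuous_within
              (horner_derivable_oo_LRcontinuous p^`() a b).
have p'E : {in `]a, b[, derive1 (horner p) =1 horner p^`()}.
  by move=> x _; rewrite derivE.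
have := Rintegration_by_parts ab cp' dp p'E cp' dp p'E.
have -> : \int[mu]_(x in `[a, b]) (p.[x] * (p^`()).[x]) =
          \int[mu]_(x in `[a, b]) ((p^`()).[x] * p.[x]).
  by apply: eq_Rintegral => x _; rewrite mulrC.
rewrite /intI Rintegral_itv_obnd_cbnd; last first.
  have -> : (fun t => (p^`()).[t] * p.[t]) = horner (p^`() * p).
    by apply/funext => t; rewrite hornerM.
  exact: integrable_horner.
rewrite -!expr2; lra.
Qed.

Lemma bounded_horner_itv (p : {poly R}) (a b : R) :
  [bounded p.[x] | x in `]a, b]].
Proof.
have := compact_bounded (continuous_compact (derivable_oo_LRcontinuous_within
  (horner_derivable_oo_LRcontinuous p a b)) (@segment_compact R a b)).
rewrite /bounded_near => /= bnd; apply: filterS bnd => K HK x xab.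
apply: HK; exists x => //.
exact: subset_itv_oc_cc.
Qed.

Lemma integrableM_horner (F : R -> R) (p : {poly R}) (a b : R) :
  mu.-integrable `]a, b] (EFin \o F) ->
  mu.-integrable `]a, b] (EFin \o (fun t => F t * p.[t])).
Proof.
move=> iF; apply: (@integrableMl _ _ _ mu _ (measurable_itv _) _ (horner p) iF).
  apply: (measurable_funS (E := setT)) => //.
  exact: continuous_measurable_fun (@continuous_horner R p).
exact: bounded_horner_itv.
Qed.

End PolynomialIntegrals.

Section IntervalEnergy.
Variable R : realType.
Notation mu := (@lebesgue_measure R).

Lemma itv_ocU (a b c : R) : a <= b -> b <= c ->
  [set` `]a, c]] = [set` `]a, b]] `|` [set` `]b, c]].
Proof. by move=> ab bc; apply: itv_bndbnd_setU; rewrite bnd_simp. Qed.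

Lemma disj_itv_oc (a b c : R) : [disjoint [set` `]a, b]] & [set` `]b, c]]].
Proof.
apply/disj_setPS => x [] /=; rewrite !in_itv /= => /andP[_ xb] /andP[bx _].
by move: (lt_le_trans bx xb); rewrite ltxx.
Qed.

Lemma integrable_itv_ocU (a b c : R) (g : R -> R) : a <= b -> b <= c ->
  mu.-integrable `]a, b] (EFin \o g) -> mu.-integrable `]b, c] (EFin \o g) ->
  mu.-integrable `]a, c] (EFin \o g).
Proof.
move=> ab bc iab ibc; rewrite (itv_ocU ab bc).
have mg : measurable_fun ([set` `]a, b]] `|` [set` `]b, c]]) (EFin \o g).
  apply/measurable_funU => //.
  by split; [exact: measurable_int iab | exact: measurable_int ibc].
apply/integrableP; split => //; rewrite ge0_integral_setU //.
- move/integrableP: iab => [_ fab]; move/integrableP: ibc => [_ fbc].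
  exact: lte_add_pinfty.
- exact: measurableT_comp.
- exact: disj_itv_oc.
Qed.

Lemma intI_itv_ocU (a b c : R) (g : R -> R) : a <= b -> b <= c ->
  mu.-integrable `]a, b] (EFin \o g) -> mu.-integrable `]b, c] (EFin \o g) ->
  intI a c g = intI a b g + intI b c g.
Proof.
move=> ab bc iab ibc.
have iac := integrable_itv_ocU ab bc iab ibc.
rewrite /intI (itv_ocU ab bc) Rintegral_setU //; last exact: disj_itv_oc.
by rewrite -(itv_ocU ab bc).
Qed.

Lemma integrable_sum_itv (I : Type) (s : seq I) (a b : R) (g : I -> R -> R) :
  (forall i, mu.-integrable `]a, b] (EFin \o g i)) ->
  mu.-integrable `]a, b] (EFin \o (fun t => \sum_(i <- s) g i t)).
Proof.
move=> ig.
have isum : mu.-integrable `]a, b] (fun t => \sum_(i <- s) (EFin \o g i) t).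
  exact: integrable_sum.
by apply: eq_integrable isum => // t _; rewrite /= sumEFin.
Qed.

Lemma intI_sum (I : Type) (s : seq I) (a b : R) (g : I -> R -> R) :
  (forall i, mu.-integrable `]a, b] (EFin \o g i)) ->
  intI a b (fun t => \sum_(i <- s) g i t) = \sum_(i <- s) intI a b (g i).
Proof.
move=> ig; elim: s => [|i s IHs].
  under eq_fun do rewrite big_nil.
  by rewrite big_nil /intI Rintegral_cst // mul0r.
under eq_fun do rewrite big_cons.
by rewrite big_cons -IHs /intI RintegralD //; exact: integrable_sum_itv.
Qed.

Lemma integrable_mul_diff_itv (a b : R) (P Q : {poly R}) (eU eV FU FV : R -> R) :
  (forall t, a < t <= b -> eU t = P.[t]) ->
  (forall t, a < t <= b -> eV t = Q.[t]) ->
  mu.-integrable `]a, b] (EFin \o FU) -> mu.-integrable `]a, b] (EFin \o FV) ->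
  mu.-integrable `]a, b] (EFin \o (fun t => (FU t - FV t) * (eU t - eV t))).
Proof.
move=> PE QE iU iV.
have iUV : mu.-integrable `]a, b] (EFin \o (fun t => FU t - FV t)).
  by apply: eq_integrable (integrableB _ iU iV) => // t _; rewrite /= EFinB.
apply: eq_integrable (integrableM_horner (P - Q) iUV) => // t.
by rewrite inE /= in_itv /= => tab; rewrite /= PE // QE // !hornerE.
Qed.

Lemma galerkin_test_difference (a b : R) (n : nat) (P Q : {poly R})
    (wU wV : R) (FU FV : R -> R) :
  (size P <= n)%N -> (size Q <= n)%N ->
  mu.-integrable `]a, b] (EFin \o FU) -> mu.-integrable `]a, b] (EFin \o FV) ->
  (forall v : {poly R}, (size v <= n)%N ->
     (P.[a] - wU) * v.[a] + intI a b (fun t => (P^`()).[t] * v.[t])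
     = intI a b (fun t => FU t * v.[t])) ->
  (forall v : {poly R}, (size v <= n)%N ->
     (Q.[a] - wV) * v.[a] + intI a b (fun t => (Q^`()).[t] * v.[t])
     = intI a b (fun t => FV t * v.[t])) ->
  ((P - Q).[a] - (wU - wV)) * (P - Q).[a]
    + intI a b (fun t => ((P - Q)^`()).[t] * (P - Q).[t])
  = intI a b (fun t => (FU t - FV t) * (P - Q).[t]).
Proof.
move=> sP sQ iU iV GP GQ; set D := P - Q.
have sD : (size D <= n)%N.
  by rewrite (leq_trans (size_polyD _ _)) // size_polyN geq_max sP sQ.
have intD (p : {poly R}) :
    mu.-integrable `]a, b] (EFin \o (fun t => (p^`()).[t] * D.[t])).
  exact: integrableM_horner (integrable_horner p^`() a b).
have derivE : intI a b (fun t => (D^`()).[t] * D.[t])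
    = intI a b (fun t => (P^`()).[t] * D.[t])
      - intI a b (fun t => (Q^`()).[t] * D.[t]).
  rewrite /intI -RintegralB //; apply: eq_Rintegral => t _.
  by rewrite /D derivB !hornerE mulrBl.
have rhsE : intI a b (fun t => (FU t - FV t) * D.[t])
    = intI a b (fun t => FU t * D.[t]) - intI a b (fun t => FV t * D.[t]).
  rewrite /intI -RintegralB.
  - by apply: eq_Rintegral => t _; rewrite mulrBl.
  - exact: measurable_itv.
  - exact: integrableM_horner.
  - exact: integrableM_horner.
have Da : D.[a] = P.[a] - Q.[a] by rewrite /D hornerD hornerN.
rewrite derivE rhsE -(GP D sD) -(GQ D sD) Da; ring.
Qed.

Lemma dG_interval_energy (a b : R) (n : nat) (P Q : {poly R})
    (wU wV : R) (eU eV FU FV : R -> R) :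
  a < b -> (size P <= n)%N -> (size Q <= n)%N ->
  (forall t, a < t <= b -> eU t = P.[t]) ->
  (forall t, a < t <= b -> eV t = Q.[t]) ->
  mu.-integrable `]a, b] (EFin \o FU) -> mu.-integrable `]a, b] (EFin \o FV) ->
  (forall v : {poly R}, (size v <= n)%N ->
     (P.[a] - wU) * v.[a] + intI a b (fun t => (P^`()).[t] * v.[t])
     = intI a b (fun t => FU t * v.[t])) ->
  (forall v : {poly R}, (size v <= n)%N ->
     (Q.[a] - wV) * v.[a] + intI a b (fun t => (Q^`()).[t] * v.[t])
     = intI a b (fun t => FV t * v.[t])) ->
  (eU b - eV b) ^+ 2 - (wU - wV) ^+ 2
    <= 2 * intI a b (fun t => (FU t - FV t) * (eU t - eV t)).
Proof.
move=> ab sP sQ PE QE iU iV GP GQ.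
have := galerkin_test_difference sP sQ iU iV GP GQ.
set D := P - Q; rewrite intI_deriv_mul_poly //.
have -> : intI a b (fun t => (FU t - FV t) * D.[t])
    = intI a b (fun t => (FU t - FV t) * (eU t - eV t)).
  apply: eq_Rintegral => t; rewrite inE /= in_itv /= => tab.
  by rewrite PE // QE // /D !hornerE.
have -> : eU b - eV b = D.[b] by rewrite PE ?QE ?lexx ?ab // /D !hornerE.
set J := intI _ _ _; set x := D.[a]; move=> energy.
have := sqr_ge0 (x - (wU - wV)); lra.
Qed.

Lemma energy_telescope (n : nat) (t e : nat -> R) (g : R -> R) :
  (forall j, (j < n)%N -> t j < t j.+1) ->
  (forall j, (j < n)%N ->
     mu.-integrable `]t j, t j.+1] (EFin \o g) /\
     e j.+1 ^+ 2 - e j ^+ 2 <= 2 * intI (t j) (t j.+1) g) ->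
  forall k, (k <= n)%N ->
    mu.-integrable `]t 0%N, t k] (EFin \o g) /\
    e k ^+ 2 - e 0%N ^+ 2 <= 2 * intI (t 0%N) (t k) g.
Proof.
move=> t_incr step.
have t0_le k : (k <= n)%N -> t 0%N <= t k.
  elim: k => [|k IHk] kn //.
  by apply: le_trans (IHk (ltnW kn)) (ltW (t_incr k kn)).
elim=> [|k IHk] kn.
  rewrite /intI set_itv_ge ?bnd_simp ?ltxx // Rintegral_set0 subrr mulr0.
  by split; first exact: integrable_set0.
have [i0k e0k] := IHk (ltnW kn).
have [ikk ekk] := step k kn.
have t0k := t0_le k (ltnW kn); have tkk := ltW (t_incr k kn).
split; first exact: integrable_itv_ocU i0k ikk.
rewrite (intI_itv_ocU t0k tkk i0k ikk); lra.
Qed.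

End IntervalEnergy.


Definition dissipation (R : realType) (N : nat)
    (f : ('I_N -> R) -> R -> ('I_N -> R)) (U V : 'I_N -> R -> R)
    (i : 'I_N) (t : R) : R :=
  (f (fun k => U k t) t i - f (fun k => V k t) t i) * (U i t - V i t).

Section MdGEnergy.
Variables (R : realType) (N : nat) (T : R).
Variables (M : 'I_N -> nat) (tp : 'I_N -> nat -> R) (q : 'I_N -> nat -> nat).
Variable f : ('I_N -> R) -> R -> ('I_N -> R).
Variables (U0 V0 : 'I_N -> R) (U V : 'I_N -> R -> R).
Hypothesis partitions : valid_partitions T M tp.
Hypothesis U_sol : mdG_solution M tp q f U0 U.
Hypothesis V_sol : mdG_solution M tp q f V0 V.

Lemma mdG_component_energy (i : 'I_N) (j : nat) : (0 < j <= M i)%N ->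
  (@lebesgue_measure R).-integrable `]0, tp i j] (EFin \o dissipation f U V i) /\
  (U i (tp i j) - V i (tp i j)) ^+ 2 - (U0 i - V0 i) ^+ 2
    <= 2 * intI 0 (tp i j) (dissipation f U V i).
Proof.
case/andP=> j0 jM; have [tp0 [_ tp_incr]] := partitions i.
pose e k := if k == 0%N then U0 i - V0 i else U i (tp i k) - V i (tp i k).
have step k : (k < M i)%N ->
    (@lebesgue_measure R).-integrable `]tp i k, tp i k.+1]
      (EFin \o dissipation f U V i) /\
    e k.+1 ^+ 2 - e k ^+ 2 <= 2 * intI (tp i k) (tp i k.+1) (dissipation f U V i).
  move=> kM; have kM' : (0 < k.+1 <= M i)%N by rewrite ltn0Sn kM.
  have [P [sP [PE [iP GP]]]] := U_sol kM'.
  have [Q [sQ [QE [iQ GQ]]]] := V_sol kM'.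
  split; first exact: integrable_mul_diff_itv PE QE iP iQ.
  have := dG_interval_energy (tp_incr k kM) sP sQ PE QE iP iQ GP GQ.
  by rewrite /e /=; case: (k == 0%N).
have := energy_telescope tp_incr step jM.
by rewrite tp0 /e eqxx (gtn_eqF j0).
Qed.

End MdGEnergy.

Lemma sum_intI_dissipation_le0 (R : realType) (N : nat) (T tb : R)
    (f : ('I_N -> R) -> R -> ('I_N -> R)) (U V : 'I_N -> R -> R) :
  monotone_rhs T f -> tb <= T ->
  (forall i, (@lebesgue_measure R).-integrable `]0, tb]
     (EFin \o dissipation f U V i)) ->
  \sum_(i < N) intI 0 tb (dissipation f U V i) <= 0.
Proof.
move=> mon tbT idiss; rewrite -intI_sum // /intI.
apply: (@le_trans _ _ (Rintegral (@lebesgue_measure R) `]0, tb] (fun=> 0))).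
  apply: le_Rintegral; [by [] | exact: integrable_sum_itv | exact: integrable0 |].
  move=> t /=; rewrite in_itv /= => /andP[t0 ttb].
  by apply: mon; rewrite t0 (le_trans ttb tbT).
by rewrite Rintegral_cst // mul0r.
Qed.

Theorem theorem5p2 (R : realType) (N : nat) (T : R) (hT : 0 < T)
  (M : 'I_N -> nat) (tp : 'I_N -> nat -> R) (q : 'I_N -> nat -> nat)
  (f : ('I_N -> R) -> R -> ('I_N -> R))
  (U0 V0 : 'I_N -> R) (U V : 'I_N -> R -> R) (tbar : R) :
  valid_partitions T M tp ->
  monotone_rhs T f ->
  mdG_solution M tp q f U0 U ->
  mdG_solution M tp q f V0 V ->
  synchronized T M tp tbar ->
  vnorm (vsub (fun i => U i tbar) (fun i => V i tbar)) <= vnorm (vsub U0 V0).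
Proof.
move=> partitions mon U_sol V_sol [/andP[tb0 tbT] sync].
have energy i :
    (@lebesgue_measure R).-integrable `]0, tbar] (EFin \o dissipation f U V i) /\
    (U i tbar - V i tbar) ^+ 2 - (U0 i - V0 i) ^+ 2
      <= 2 * intI 0 tbar (dissipation f U V i).
  have [j [jM tpj]] := sync i; have [tp0 _] := partitions i.
  rewrite -tpj; apply: (mdG_component_energy partitions U_sol V_sol).
  rewrite jM andbT lt0n; apply: contraTneq tb0 => j0.
  by rewrite -tpj j0 tp0 ltxx.
have sum_diss := sum_intI_dissipation_le0 mon tbT (fun i => (energy i).1).
have sum_energy : \sum_(i < N) ((U i tbar - V i tbar) ^+ 2 - (U0 i - V0 i) ^+ 2)
    <= \sum_(i < N) 2 * intI 0 tbar (dissipation f U V i).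
  by apply: ler_sum => i _; exact: (energy i).2.
rewrite sumrB -mulr_sumr in sum_energy.
rewrite /vnorm ler_sqrt; last by apply: sumr_ge0 => i _; rewrite -expr2 sqr_ge0.
rewrite /vdot /vsub; under eq_bigr do rewrite -expr2.
under [X in _ <= X]eq_bigr do rewrite -expr2.
lra.
Qed.
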